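(* Let $n\ge1$, let $r$ be an integer with $(n+1)/2<r\le n$, and let $\alpha\in(0,1/2)$. Let $\theta\in\mathbb{R}^n$ and let $T_1,\dots,T_n$ be independent with $T_i\sim N(\theta_i,1)$; let $T_{(1)}\le\dots\le T_{(n)}$ be their order statistics. Let $\Phi$ be the standard normal cumulative distribution function and $t=\Phi^{-1}\{1-\alpha/(n-r+1)\}$. Let $n^+(\theta)=|\{i:\theta_i>0\}|$ and $n^-(\theta)=|\{i:\theta_i<0\}|$. Then $$\sup_{\theta\in\mathbb{R}^n:\ n^+(\theta)\ge r}\Pr_\theta\big(T_{(r)}<-t\big)\le\alpha\qquad\text{and}\qquad \sup_{\theta\in\mathbb{R}^n:\ n^-(\theta)\ge r}\Pr_\theta\big(T_{(n-r+1)}>t\big)\le\alpha.$$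
   Context: This is Type III (wrong sign) error control for the directional replicability test that rejects ''$n^+<r$ and $n^-<r$'' when $\min\{(n-r+1)p_{(r)},(n-r+1)q_{(r)}\}\le\alpha$, where $p_i=1-\Phi(T_i)$, $q_i=\Phi(T_i)$; the event $T_{(r)}\le -t$ is equivalent to $(n-r+1)q_{(r)}\le\alpha$ (declaring a negative replicated effect) and $T_{(n-r+1)}\ge t$ is equivalent to $(n-r+1)p_{(r)}\le\alpha$ (declaring a positive replicated effect). *)

From HB Require Import structures.
From mathcomp Require Import all_boot all_order all_algebra.
From mathcomp Require Import all_classical all_reals all_analysis.
Set Implicit Arguments. Unset Strict Implicit. Unset Printing Implicit Defensive.
Import Order.TTheory GRing.Theory Num.Theory.
Local Open Scope classical_set_scope.
Local Open Scope ring_scope.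

Definition mutually_independent {R : realType} {d : measure_display}
  {Omega : measurableType d} (P : probability Omega R) (n : nat)
  (X : 'I_n -> {RV P >-> R}) : Prop :=
  forall (J : {set 'I_n}) (B : 'I_n -> set R),
    (forall i, measurable (B i)) ->
    P (\bigcap_(i in [set` J]) (X i @^-1` B i)) =
    (\prod_(i in J) P (X i @^-1` B i))%E.

Definition orderstat {R : realType} (n : nat) (x : 'I_n -> R) (k : nat) : R :=
  nth 0 (sort <=%R [seq x i | i <- enum 'I_n]) k.-1.

Definition Phi {R : realType} (x : R) : \bar R := normal_prob 0 1 `]-oo, x].

Definition npos {R : realType} (n : nat) (theta : 'I_n -> R) : nat :=
  #|[set i | 0 < theta i]|.
Definition nneg {R : realType} (n : nat) (theta : 'I_n -> R) : nat :=
  #|[set i | theta i < 0]|.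

From HB Require Import structures.
From mathcomp Require Import all_boot all_order all_algebra.
From mathcomp Require Import all_classical all_reals all_analysis.
From mathcomp Require Import zify lra measurable_realfun.
Import Order.TTheory GRing.Theory Num.Theory.
Import numFieldTopology.Exports.
Local Open Scope classical_set_scope.
Local Open Scope ring_scope.
Set Implicit Arguments. Unset Strict Implicit. Unset Printing Implicit Defensive.

(* T_(r) < -t means that at least r of the T_i lie below -t. Since r > (n+1)/2
   and at least r of the theta_i are positive, we can fix n - r + 1 indices with
   theta_i > 0, and every set of r indices meets them; so the event is covered by
   the union of the events {T_i < -t} over these n - r + 1 indices. For
   theta_i > 0 and t >= 0, P(T_i < -t) = P(N(-theta_i, 1) >= t) <= P(N(0, 1) >= t)
   = alpha / (n - r + 1), and t >= 0 because alpha / (n - r + 1) < 1/2. The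
   union bound gives alpha. The second
   claim is the mirror image. *)

Section sorted_nth_count.
Context {disp : Order.disp_t} {T : orderType disp}.
Implicit Types (c : T) (s : seq T).
Local Open Scope order_scope.

Lemma sorted_nth_ltE (x0 : T) c s i : sorted <=%O s -> (i < size s)%N ->
  (nth x0 s i < c) = (i < count (< c) s)%N.
Proof.
move=> ss ilt; apply/idP/idP => [|/(nth_count_lt x0 ss)//].
apply: contraTT; rewrite -leqNgt -leNgt => ige.
by apply: nth_count_ge => //; rewrite ige.
Qed.

Lemma sorted_nth_leE (x0 : T) c s i : sorted <=%O s -> (i < size s)%N ->
  (nth x0 s i <= c) = (i < count (<= c) s)%N.
Proof.
move=> ss ilt; apply/idP/idP => [|/(nth_count_le x0 ss)//].
apply: contraTT; rewrite -leqNgt -ltNge => ige.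
by apply: nth_count_gt => //; rewrite ige.
Qed.

Lemma sorted_nth_gtE (x0 : T) c s i : sorted <=%O s -> (i < size s)%N ->
  (c < nth x0 s i) = (size s - i <= count (> c) s)%N.
Proof.
move=> ss ilt; rewrite ltNge sorted_nth_leE // count_le_gt.
have := count_size (> c) s; lia.
Qed.

End sorted_nth_count.

Lemma count_enum_card (I : finType) (p : pred I) : count p (enum I) = #|[pred i | p i]|.
Proof. by rewrite cardE -size_filter /enum_mem filter_predT. Qed.

Section order_statistics.
Context {R : realType} {n : nat}.
Implicit Types (x : 'I_n -> R) (c : R).

Lemma orderstat_ltE x k c : (0 < k <= n)%N ->
  (orderstat x k < c) = (k <= #|[pred i | (x i < c)%R]|)%N.
Proof.
case/andP=> k0 kn; rewrite /orderstat sorted_nth_ltE ?sort_le_sorted //; last first.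
  by rewrite size_sort size_map size_enum_ord; lia.
by rewrite count_sort count_map count_enum_card; case: k k0 kn.
Qed.

Lemma orderstat_gtE x k c : (0 < k <= n)%N ->
  (c < orderstat x k) = (n - k < #|[pred i | (c < x i)%R]|)%N.
Proof.
case/andP=> k0 kn; rewrite /orderstat sorted_nth_gtE ?sort_le_sorted //; last first.
  by rewrite size_sort size_map size_enum_ord; lia.
rewrite count_sort count_map count_enum_card size_sort size_map size_enum_ord.
set m := #|_|; lia.
Qed.

End order_statistics.

Lemma has_card_gt (I : finType) (A : {pred I}) (s : seq I) :
  uniq s -> (#|I| - size s < #|A|)%N -> has A s.
Proof.
move=> us; apply: contraTT => /hasPn sA; rewrite -leqNgt.
rewrite -(card_uniqP us) -(cardC (mem s)) addKn; apply: subset_leq_card.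
by apply/fintype.subsetP => x xA; rewrite inE; apply: contraTN xA => /sA.
Qed.

Section union_bound.
Context d (T : measurableType d) (R : realType) (mu : {measure set T -> \bar R}).
Local Open Scope ereal_scope.

Lemma measure_bigsetU_le (I : Type) (s : seq I) (A : I -> set T) :
  (forall i, measurable (A i)) ->
  mu (\big[setU/set0]_(i <- s) A i) <= \sum_(i <- s) mu (A i).
Proof.
move=> mA; elim: s => [|i s IH]; first by rewrite !big_nil measure0.
rewrite !big_cons (le_trans (measureU2 _ _ _)) ?leeD2l //.
exact: bigsetU_measurable.
Qed.

Variables (I : finType) (f : I -> T -> bool).
Hypothesis mf : forall i, measurable [set w | f i w].

Lemma measurable_card_ge m : measurable [set w | (m <= #|[pred i | f i w]|)%N].
Proof.
have -> : [set w | (m <= #|[pred i | f i w]|)%N] =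
    \bigcup_(A in [set A : {set I} | (m <= #|A|)%N])
      \bigcap_(i in [set i | i \in A]) [set w | f i w].
  apply/seteqP; split => w /=.
  - move=> mw; exists [set i | f i w]%SET => /= [|i]; last by rewrite /= inE.
    by rewrite (eq_card (finset.in_set _)).
  - move=> [A /= mA Aw]; apply: leq_trans mA (subset_leq_card _).
    by apply/fintype.subsetP => i iA; rewrite inE; exact: Aw.
apply: fin_bigcup_measurable; first exact: finite_finset.
move=> A _; apply: fin_bigcap_measurable => //; exact: finite_finset.
Qed.

Lemma measure_at_least_le (S : {pred I}) r (b : R) :
  (#|I| - r < #|S|)%N -> {in S, forall i, mu [set w | f i w] <= b%:E} ->
  mu [set w | (r <= #|[pred i | f i w]|)%N] <= ((#|I| - r).+1%:R * b)%:E.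
Proof.
move=> rS Sb; have [s [us size_s sS]] := card_geqP rS.
have cover : [set w | (r <= #|[pred i | f i w]|)%N] `<=`
    \big[setU/set0]_(i <- s) [set w | f i w].
  move=> w /= rw; have /hasP[i si iw] : has [pred i | f i w] s.
    apply: has_card_gt => //; rewrite size_s; apply: leq_trans rw; have := max_card S; lia.
  by rewrite -(bigcup_seq s (fun i => [set w | f i w])); exists i.
apply: le_trans (le_measure _ _ _ cover) _; rewrite ?inE.
- exact: measurable_card_ge.
- exact: bigsetU_measurable.
apply: le_trans (measure_bigsetU_le _ _) _ => //.
rewrite -size_s (_ : ((size s)%:R * b)%:E = \sum_(i <- s) b%:E); last first.
  by rewrite sumEFin big_const_seq count_predT -Monoid.iteropE mulr_natl.
by rewrite big_seq [leRHS]big_seq; apply: lee_sum => i /sS; exact: Sb.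
Qed.

End union_bound.

Section normal_tails.
Context {R : realType}.
Local Open Scope ereal_scope.

Lemma normal_prob_Ny_add_cy (m s a : R) :
  normal_prob m s `]-oo, a] + normal_prob m s `[a, +oo[ = 1.
Proof.
have -> : normal_prob m s `[a, +oo[ = normal_prob m s `]a, +oo[.
  rewrite /normal_prob -integral_itv_obnd_cbnd //.
  by apply: measurable_funTS; apply/measurable_EFinP; exact: measurable_normal_pdf.
rewrite -measureU //=.
- rewrite (_ : _ `|` _ = setT) ?probability_setT //.
  apply/seteqP; split => x //= _; rewrite !in_itv /= andbT.
  by case: (leP x a); [left|right].
- apply/seteqP; split => x //= []; rewrite !in_itv /= andbT => xa ax.
  by move: (le_lt_trans xa ax); rewrite ltxx.
Qed.

Context (s : R).
Hypothesis s0 : (s != 0)%R.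

Lemma normal_pdfN (m x : R) : normal_pdf m s (- x) = normal_pdf (- m) s x.
Proof. by rewrite /normal_pdf (negbTE s0) /normal_fun -opprD sqrrN opprK. Qed.

Lemma normal_prob_NyN (m a : R) :
  normal_prob m s `]-oo, (- a)%R] = normal_prob (- m) s `[a, +oo[.
Proof.
rewrite /normal_prob ge0_integration_by_substitutionNy.
- by apply: eq_integral => x _; rewrite /= normal_pdfN.
- by apply: continuous_in_subspaceT => x _; exact: continuous_normal_pdf.
- by move=> x _; exact: normal_pdf_ge0.
Qed.

(* The densities compare pointwise on [[a, +oo[], where [x^2 <= (x - m)^2]. *)
Lemma normal_prob_cy_le_centered (m a : R) : (m <= 0)%R -> (0 <= a)%R ->
  normal_prob m s `[a, +oo[ <= normal_prob 0 s `[a, +oo[.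
Proof.
move=> m0 a0; rewrite /normal_prob; apply: ge0_le_integral => //.
- by move=> x _; rewrite lee_fin normal_pdf_ge0.
- by apply: measurable_funTS; apply/measurable_EFinP; exact: measurable_normal_pdf.
- by apply: measurable_funTS; apply/measurable_EFinP; exact: measurable_normal_pdf.
- move=> x /=; rewrite in_itv /= andbT => ax.
  rewrite lee_fin /normal_pdf (negbTE s0); apply: ler_wpM2l; first exact: normal_peak_ge0.
  rewrite /normal_fun ler_expR !mulNr lerN2; apply: ler_wpM2r.
    by rewrite invr_ge0 mulrn_wge0 // sqr_ge0.
  rewrite subr0; nra.
Qed.

Lemma normal_prob_Ny_le_half (a : R) : (a <= 0)%R ->
  normal_prob 0 s `]-oo, a] <= 2^-1%:E.
Proof.
move=> a0.
have sym : normal_prob 0 s `]-oo, a] = normal_prob 0 s `[(- a)%R, +oo[.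
  by rewrite -{1}(opprK a) normal_prob_NyN oppr0.
have mono : normal_prob 0 s `]-oo, a] <= normal_prob 0 s `]-oo, (- a)%R].
  apply: le_measure; rewrite ?inE // => x /=; rewrite !in_itv /= => xa.
  by apply: le_trans xa _; lra.
have := normal_prob_Ny_add_cy 0 s (- a); rewrite -sym.
have := measure_ge0 (normal_prob 0 s) `]-oo, a]; move: mono.
case: (normal_prob 0 s `]-oo, a]) => [x||] //; case: (normal_prob 0 s `]-oo, (- a)%R]) => [y||] //.
rewrite !lee_fin -EFinD => xy x0 [xy1]; lra.
Qed.

End normal_tails.

Lemma normal_prob_cy_of_Phi (R : realType) (t b : R) : Phi t = (1 - b)%:E -> normal_prob 0 1 `[t, +oo[ = b%:E.
Proof.
move=> Phit; move: (normal_prob_Ny_add_cy 0 1 t); rewrite -/(Phi t) Phit.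
case: (normal_prob 0 1 `[t, +oo[) => [q||] //= h.
by rewrite -EFinD in h; case: h => hq; congr EFin; lra.
Qed.

Lemma Phi_gt_half_ge0 (R : realType) (t : R) : (2^-1%:E < Phi t)%E -> 0 <= t.
Proof.
rewrite leNgt; apply: contraTN => /ltW t_le0.
by rewrite -leNgt; exact: (normal_prob_Ny_le_half (oner_neq0 R) t_le0).
Qed.

(* With [classical_set_scope] open, [[set i | p i]] in [npos] and [nneg] is a
   classical set, not a finset. *)
Lemma card_set_pred (I : finType) (p : pred I) : #|[set i | p i]| = #|[pred i | p i]|.
Proof. by apply: eq_card => i; rewrite inE; apply/idP/idP; rewrite in_setE. Qed.

Section normal_coordinate.
Context d (Omega : measurableType d) (R : realType) (P : probability Omega R).
Variables (X : {RV P >-> R}) (m s : R).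
Hypothesis s0 : s != 0.
Hypothesis X_normal :
  forall A, measurable A -> distribution P X A = normal_prob m s A.
Local Open Scope ereal_scope.

Lemma measurable_lt_cst (c : R) : measurable [set w | (X w < c)%R].
Proof.
rewrite (_ : [set w | _] = X @^-1` `]-oo, c[); first exact: measurable_funPTI.
by apply/seteqP; split => w /=; rewrite in_itv.
Qed.

Lemma measurable_gt_cst (c : R) : measurable [set w | (c < X w)%R].
Proof.
rewrite (_ : [set w | _] = X @^-1` `]c, +oo[); first exact: measurable_funPTI.
by apply/seteqP; split => w /=; rewrite in_itv /= andbT.
Qed.

Lemma prob_lt_opp_le_tail (t : R) : (0 <= m)%R -> (0 <= t)%R ->
  P [set w | (X w < - t)%R] <= normal_prob 0 s `[t, +oo[.
Proof.
move=> m0 t0; apply: (@le_trans _ _ (P (X @^-1` `]-oo, (- t)%R]))).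
  apply: le_measure; rewrite ?inE; [exact: measurable_lt_cst|exact: measurable_funPTI|].
  by move=> w /=; rewrite in_itv /= => /ltW.
rewrite -[P _]/(distribution P X _) X_normal // normal_prob_NyN //.
by apply: normal_prob_cy_le_centered; rewrite ?oppr_le0.
Qed.

Lemma prob_gt_le_tail (t : R) : (m <= 0)%R -> (0 <= t)%R ->
  P [set w | (t < X w)%R] <= normal_prob 0 s `[t, +oo[.
Proof.
move=> m0 t0; apply: (@le_trans _ _ (P (X @^-1` `[t, +oo[))).
  apply: le_measure; rewrite ?inE; [exact: measurable_gt_cst|exact: measurable_funPTI|].
  by move=> w /=; rewrite in_itv /= andbT => /ltW.
by rewrite -[P _]/(distribution P X _) X_normal //; exact: normal_prob_cy_le_centered.
Qed.

End normal_coordinate.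

Theorem proposition2 (R : realType) (d : measure_display)
  (Omega : measurableType d) (P : probability Omega R)
  (n r : nat) (alpha t : R) :
  (1 <= n)%N ->
  (n + 1)%:R / 2 < r%:R :> R -> (r <= n)%N ->
  0 < alpha < 1 / 2 ->
  Phi t = (1 - alpha / (n - r + 1)%:R)%:E ->
  (forall (theta : 'I_n -> R) (T : 'I_n -> {RV P >-> R}),
     mutually_independent T ->
     (forall i A, measurable A -> distribution P (T i) A = normal_prob (theta i) 1 A) ->
     (r <= npos theta)%N ->
     (P [set w | (orderstat (fun i => T i w) r < - t)%R] <= alpha%:E)%E) /\
  (forall (theta : 'I_n -> R) (T : 'I_n -> {RV P >-> R}),
     mutually_independent T ->
     (forall i A, measurable A -> distribution P (T i) A = normal_prob (theta i) 1 A) ->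
     (r <= nneg theta)%N ->
     (P [set w | (orderstat (fun i => T i w) (n - r + 1) > t)%R] <= alpha%:E)%E).
Proof.
move=> _ hr rn /andP[a0 a_half] hPhi.
have r_big : (n - r < r)%N by move: hr; rewrite ltr_pdivrMr // -natrM ltr_nat; lia.
rewrite addn1 in hPhi *; set k := (n - r).+1 in hPhi *.
have k1 : 1 <= k%:R :> R by rewrite ler1n.
set b := alpha / k%:R in hPhi *.
have kb : k%:R * b = alpha by rewrite mulrC divfK // gt_eqF // (lt_le_trans ltr01).
have tail_b := normal_prob_cy_of_Phi hPhi.
have t0 : 0 <= t.
  apply: Phi_gt_half_ge0; rewrite hPhi lte_fin.
  have b0 : 0 <= b by rewrite divr_ge0 // ltW.
  nra.
split => theta T _ T_normal r_le.
- have -> : [set w | (orderstat (fun i => T i w) r < - t)%R] =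
      [set w | (r <= #|[pred i | (T i w < - t)%R]|)%N].
    by apply/seteqP; split => w /=; rewrite orderstat_ltE // rn andbT; lia.
  rewrite -kb; apply: le_trans (measure_at_least_le _ (S := [pred i | 0 < theta i]) (b := b) _ _) _.
  + by move=> i; exact: measurable_lt_cst.
  + by rewrite card_ord -card_set_pred; exact: leq_trans r_big r_le.
  + by move=> i thi; rewrite -tail_b (prob_lt_opp_le_tail (oner_neq0 R) (T_normal i) (ltW thi) t0).
  + by rewrite card_ord.
- have -> : [set w | (t < orderstat (fun i => T i w) k)%R] =
      [set w | (r <= #|[pred i | (t < T i w)%R]|)%N].
    by apply/seteqP; split => w /=; rewrite orderstat_gtE; lia.
  rewrite -kb; apply: le_trans (measure_at_least_le _ (S := [pred i | theta i < 0]) (b := b) _ _) _.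
  + by move=> i; exact: measurable_gt_cst.
  + by rewrite card_ord -card_set_pred; exact: leq_trans r_big r_le.
  + by move=> i thi; rewrite -tail_b (prob_gt_le_tail (oner_neq0 R) (T_normal i) (ltW thi) t0).
  + by rewrite card_ord.
Qed.
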